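(* Let $p$ be a random partition and let $\mathrm{Sh}^p$ be its $p$-Shapley value, $$\mathrm{Sh}^p_i(w)=\sum_{(T,\tau)\in\mathcal{E}(N\setminus\{i\})}\Big(p_N(\{T\cup\{i\}\}\cup\tau)\,w(T\cup\{i\},\tau)-\frac{t}{n-t}\sum_{B\in\tau\cup\{\emptyset\}}p_N(\{T\}\cup\tau_{+i\leadsto B})\,w(T,\tau_{+i\leadsto B})\Big)$$ for $N\subseteq\mathbf{U}$, $w\in\mathbb{W}(N)$, $i\in N$. Then $\mathrm{Sh}^p$ satisfies the null player property if and only if $p=p^\star$, i.e., if and only if $\mathrm{Sh}^p=\mathrm{MPW}$.
   Context: $\mathbf{U}$ is a finite set of players; cardinalities of $N,S,T,B$ are $n,s,t,b$. $\Pi(N)$ is the set of partitions of $N$ ($\Pi(\emptyset)=\{\emptyset\}$). A random partition is $p=(p_N)_{N\subseteq\mathbf{U}}$ with $p_N$ a probability distribution on $\Pi(N)$; $p^\star$ is the Ewens distribution $p^\star_N(\pi)=\frac{\prod_{B\in\pi}(b-1)!}{n!}$. $\pi_{+i\leadsto B}=(\pi\setminus\{B\})\cup\{B\cup\{i\}\}$ for $B\in\pi$, $\pi_{+i\leadsto\emptyset}=\pi\cup\{\{i\}\}$. Embedded coalitions $\mathcal{E}(N)=\{(S,\pi):S\subseteq N,\pi\in\Pi(N\setminus S)\}$; a TUX game on $N$ is $w:\mathcal{E}(N)\to\mathbb{R}$ with $w(\emptyset,\pi)=0$; $\mathbb{W}(N)$ their set. Player $i$ is a null player in $w\in\mathbb{W}(N)$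 if $w(S\cup\{i\},\pi)=w(S,\pi_{+i\leadsto B})$ for all $(S,\pi)\in\mathcal{E}(N\setminus\{i\})$ and $B\in\pi\cup\{\emptyset\}$. A solution $\varphi$ (assigning $\varphi(w)\in\mathbb{R}^N$ to every $w\in\mathbb{W}(N)$, $N\subseteq\mathbf{U}$) satisfies the null player property if $\varphi_i(w)=0$ whenever $i$ is a null player in $w$. The Shapley value of a TU game $v$ is $\mathrm{Sh}_i(v)=\sum_{S\subseteq N\setminus\{i\}}\frac{s!(n-s-1)!}{n!}(v(S\cup\{i\})-v(S))$; the MPW solution is $\mathrm{MPW}(w)=\mathrm{Sh}(\bar v^\star_w)$ with $\bar v^\star_w(S)=\sum_{\pi\in\Pi(N\setminus S)}p^\star_{N\setminus S}(\pi)w(S,\pi)$. *)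

From HB Require Import structures.
From mathcomp Require Import all_boot all_order all_algebra.
Set Implicit Arguments. Unset Strict Implicit. Unset Printing Implicit Defensive.
Import Order.TTheory GRing.Theory Num.Theory.
Local Open Scope ring_scope.

Section Defs.
Variables (R : realFieldType) (U : finType).

(* Pi(N): the set of partitions of N (mathcomp's [partition], blocks nonempty);
   Pi(set0) = [set set0]. *)
Definition Pi (N : {set U}) : {set {set {set U}}} :=
  [set P : {set {set U}} | partition P N].

Definition is_random_partition (p : {set U} -> {set {set U}} -> R) : Prop :=
  forall N : {set U},
    (forall P, P \in Pi N -> 0 <= p N P) /\ \sum_(P in Pi N) p N P = 1.

Definition ewens (N : {set U}) (P : {set {set U}}) : R :=
  (\prod_(B in P) ((#|B|.-1)`!)%:R) / ((#|N|)`!)%:R.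

(* pi_{+i ~> B}; B = set0 means adding the singleton block {i}. *)
Definition plus_to (P : {set {set U}}) (i : U) (B : {set U}) : {set {set U}} :=
  if B == set0 then P :|: [set [set i]]
  else (P :\ B) :|: [set B :|: [set i]].

(* TUX games are functions on embedded coalitions (S, pi), S \subset N,
   pi \in Pi (N :\: S); only those values matter. A game on N must vanish on
   (set0, pi). *)
Definition is_game (N : {set U}) (w : {set U} -> {set {set U}} -> R) : Prop :=
  forall P, P \in Pi N -> w set0 P = 0.

Definition null_player (N : {set U}) (w : {set U} -> {set {set U}} -> R)
    (i : U) : Prop :=
  forall (S : {set U}) (P : {set {set U}}),
    S \subset N :\ i -> P \in Pi ((N :\ i) :\: S) ->
    forall B, B \in P :|: [set set0] ->
      w (S :|: [set i]) P = w S (plus_to P i B).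

Definition solution := {set U} -> ({set U} -> {set {set U}} -> R) -> U -> R.

Definition null_player_property (phi : solution) : Prop :=
  forall (N : {set U}) (w : {set U} -> {set {set U}} -> R) (i : U),
    is_game N w -> i \in N -> null_player N w i -> phi N w i = 0.

Definition pShapley (p : {set U} -> {set {set U}} -> R) : solution :=
  fun N w i =>
    \sum_(T : {set U} | T \subset N :\ i)
      \sum_(tau in Pi ((N :\ i) :\: T))
        (p N ((T :|: [set i]) |: tau) * w (T :|: [set i]) tau
         - (#|T|%:R / (#|N| - #|T|)%:R) *
           \sum_(B in tau :|: [set set0])
              p N (T |: plus_to tau i B) * w T (plus_to tau i B)).

Definition Shapley (N : {set U}) (v : {set U} -> R) (i : U) : R :=
  \sum_(S : {set U} | S \subset N :\ i)
    (((#|S|)`! * (#|N| - #|S| - 1)`!)%:R / ((#|N|)`!)%:R)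
      * (v (S :|: [set i]) - v S).

Definition MPW : solution :=
  fun N w i =>
    Shapley N (fun S => \sum_(P in Pi (N :\: S)) ewens (N :\: S) P * w S P) i.

End Defs.

(* When i is a null player of w, every w(T, τ_{+i↝B}) equals w(T ∪ {i}, τ), so Sh^p_i(w)
   collapses to a sum of the w(T ∪ {i}, τ) with coefficients depending only on p; testing
   against indicator games shows that Sh^p has the null player property iff all these
   coefficients vanish ("p is null-balanced").
   For a partition s of N \ {i} and a block T of s, the vanishing coefficient at (T, s \ {T})
   says that p_N(s_{+i↝T}) is the share |T|/n of the total mass Σ_B p_N(s_{+i↝B}); summing
   over T forces p_N(s_{+i↝B}) = |B| p_N(s_{+i↝∅}). The Ewens weights obey the same
   recursion, and splitting players off their blocks one at a time reaches the partition
   into singletons, so p_N is proportional to p*_N, hence equal to it by normalisation.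
   Finally Sh^{p*} = MPW because p*_N((T ∪ {i}) |: τ) and p*_N(T |: π) factor as Shapley
   weights times Ewens weights on the complement. *)

From mathcomp Require Import all_boot all_order all_algebra.
From mathcomp Require Import zify ring.
Import Order.TTheory GRing.Theory Num.Theory.
Set Implicit Arguments. Unset Strict Implicit. Unset Printing Implicit Defensive.
Local Open Scope ring_scope.

Section Partitions.
Variable U : finType.
Implicit Types (M N T B C X : {set U}) (P Q : {set {set U}}) (i : U).

Lemma in_Pi M P : (P \in Pi M) = partition P M.
Proof. by rewrite inE. Qed.

Lemma notin_partition_setD M X P : partition P (M :\: X) -> X != set0 -> X \notin P.
Proof.
move=> hP; apply: contra_neqN => XP; apply/setP => x; rewrite inE.
by apply/negbTE/negP => xX; have := subsetP (partitionS hP XP) x xX; rewrite inE xX.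
Qed.

Lemma Pi_setU1 M X P : X != set0 -> X \subset M -> P \in Pi (M :\: X) -> X |: P \in Pi M.
Proof.
rewrite !in_Pi => X0 XM hP.
have <- : X :|: M :\: X = M by rewrite setDE setUIr setUCr setIT; apply/setUidPr.
by apply: partitionU1 hP X0 _; rewrite -setI_eq0 setIDA setDIl setDv set0I.
Qed.

Lemma notin_Pi_setD1 M i P B : P \in Pi (M :\ i) -> B \in P :|: [set set0] -> i \notin B.
Proof.
rewrite in_Pi !inE => hP /orP[/(partitionS hP)/subsetP sB | /eqP->]; last by rewrite inE.
by apply/negP => /sB; rewrite !inE eqxx.
Qed.

Lemma Pi_plus_to M i P B : i \in M -> P \in Pi (M :\ i) -> B \in P :|: [set set0] ->
  plus_to P i B \in Pi M.
Proof.
move=> iM hP; rewrite /plus_to; case: eqP => [_ _ | /eqP B0].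
  by rewrite setUC Pi_setU1 ?sub1set // -card_gt0 cards1.
move=> hB; have BP : B \in P by move: hB; rewrite !inE (negbTE B0) orbF.
rewrite in_Pi in hP; rewrite setUC Pi_setU1 //.
- by apply/set0Pn; exists i; rewrite !inE eqxx orbT.
- by rewrite subUset sub1set iM andbT (subset_trans (partitionS hP BP)) ?subD1set.
- by rewrite in_Pi setUC -setDDl partitionD1.
Qed.

Lemma pblock_plus_to M i P B : i \in M -> P \in Pi (M :\ i) -> B \in P :|: [set set0] ->
  pblock (plus_to P i B) i = B :|: [set i].
Proof.
move=> iM hP hB; apply: def_pblock; last by rewrite !inE eqxx orbT.
  by have := Pi_plus_to iM hP hB; rewrite in_Pi => /partition_trivIset.
by rewrite /plus_to; case: eqP hB => [-> | _] _; rewrite !inE ?set0U eqxx ?orbT.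
Qed.

Definition unplus P i : {set {set U}} :=
  let C := pblock P i in
  if C :\ i == set0 then P :\ C else (P :\ C) :|: [set C :\ i].

Lemma plus_toK M i P B : i \in M -> P \in Pi (M :\ i) -> B \in P :|: [set set0] ->
  unplus (plus_to P i B) i = P.
Proof.
move=> iM hP hB; have iB := notin_Pi_setD1 hP hB.
have iP C : C \in P -> i \notin C by move=> CP; apply: notin_Pi_setD1 hP _; rewrite inE CP.
rewrite /unplus (pblock_plus_to iM hP hB) setUC setU1K // /plus_to.
case: eqP => [-> | /eqP B0].
  by rewrite setU0 setUC setU1K //; apply/negP => /iP; rewrite inE eqxx.
have BP : B \in P by move: hB; rewrite !inE (negbTE B0) orbF.
rewrite [B :|: _]setUC [P :\ B :|: _]setUC setU1K; first by rewrite setUC setD1K.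
by rewrite !inE negb_and; apply/orP; right; apply/negP => /iP; rewrite !inE eqxx.
Qed.

Lemma unplus_block Q i : pblock Q i :\ i \in unplus Q i :|: [set set0].
Proof. by rewrite /unplus; case: eqP => [-> | _]; rewrite !inE eqxx ?orbT. Qed.

Section Unplus.
Variables (M : {set U}) (i : U) (Q : {set {set U}}).
Hypotheses (iM : i \in M) (QM : Q \in Pi M).

Let hQ : partition Q M. Proof. by rewrite -in_Pi. Qed.

Let i_pblock : i \in pblock Q i. Proof. by rewrite mem_pblock (cover_partition hQ). Qed.
Let pblockQ : pblock Q i \in Q. Proof. by rewrite pblock_mem // (cover_partition hQ). Qed.

Lemma Pi_unplus : unplus Q i \in Pi (M :\ i).
Proof.
have hD := partitionD1 hQ pblockQ.
rewrite /unplus; case: eqP => [C0 | /eqP C0].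
  by rewrite in_Pi; have <- : pblock Q i = [set i] by rewrite -(setD1K i_pblock) C0 setU0.
have -> : M :\ i = (pblock Q i :\ i) :|: (M :\: pblock Q i).
  apply/setP => x; rewrite !inE; case: (eqVneq x i) => [-> | _] /=; first by rewrite i_pblock.
  by case xC: (x \in pblock Q i); rewrite /= ?andbT // (subsetP (partitionS hQ pblockQ) _ xC).
rewrite setUC in_Pi partitionU1 // -setI_eq0; apply/eqP/setP => x.
by rewrite !inE; case: (x \in pblock Q i); rewrite ?andbF.
Qed.

Lemma unplusK : plus_to (unplus Q i) i (pblock Q i :\ i) = Q.
Proof.
rewrite /unplus /plus_to; case: eqP => [C0 | /eqP C0].
  have CE : pblock Q i = [set i] by rewrite -(setD1K i_pblock) C0 setU0.
  by rewrite setUC -CE setD1K.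
have CQ : pblock Q i :\ i \notin Q :\ pblock Q i.
  apply/negP; rewrite !inE => /andP[neqC CiQ]; case/set0Pn: C0 => x xCi.
  have tQ := partition_trivIset hQ.
  have xC : x \in pblock Q i by move: xCi; rewrite inE => /andP[].
  by move: neqC; rewrite -(def_pblock tQ CiQ xCi) (def_pblock tQ pblockQ xC) eqxx.
by rewrite [Q :\ _ :|: _]setUC setU1K // [_ :\ i :|: _]setUC setD1K // setUC setD1K.
Qed.
End Unplus.

Lemma reindex_Pi (V : nmodType) M i (f : {set {set U}} -> V) : i \in M ->
  \sum_(Q in Pi M) f Q =
  \sum_(P in Pi (M :\ i)) \sum_(B in P :|: [set set0]) f (plus_to P i B).
Proof.
move=> iM; rewrite pair_big_dep /=.
rewrite (partition_big (fun PB => plus_to PB.1 i PB.2) [in Pi M]) /=; last first.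
  by move=> [P B] /andP[]; apply: Pi_plus_to.
apply: eq_bigr => Q QM.
rewrite (big_pred1 (unplus Q i, pblock Q i :\ i)) /= ?(unplusK iM QM) //.
move=> [P B] /=; apply/andP/eqP => [[/andP[hP hB] /eqP <-] | [-> ->]].
  rewrite (plus_toK iM hP hB) (pblock_plus_to iM hP hB).
  by rewrite setUC setU1K ?(notin_Pi_setD1 hP hB).
by rewrite Pi_unplus ?unplus_block ?(unplusK iM QM) ?eqxx.
Qed.

Lemma plus_to_setD1 P i T B : T \in P -> T != set0 -> B \in (P :\ T) :|: [set set0] ->
  T |: plus_to (P :\ T) i B = plus_to P i B.
Proof.
move=> TP T0; rewrite /plus_to; case: eqP => [_ _ | /eqP B0]; first by rewrite setUA setD1K.
rewrite !inE (negbTE B0) orbF => /andP[BT BP]; rewrite setUA; congr (_ :|: _).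
by rewrite setDDl [[set T] :|: [set B]]setUC -setDDl setD1K // !inE eq_sym BT.
Qed.

Lemma card_plus_to M i P B : P \in Pi (M :\ i) -> B \in P :|: [set set0] ->
  #|plus_to P i B| = (#|P| + (B == set0))%N.
Proof.
move=> hP hB; have iP C : C \in P -> i \notin C.
  by move=> CP; apply: notin_Pi_setD1 hP _; rewrite inE CP.
rewrite /plus_to; case: eqP => [_ | /eqP B0].
  by rewrite setUC cardsU1 addnC; case: (boolP (_ \in P)) => // /iP; rewrite inE eqxx.
have BP : B \in P by move: hB; rewrite !inE (negbTE B0) orbF.
rewrite setUC cardsU1 [#|P|](cardsD1 B) BP addn0 add1n; case: (boolP (_ \in _)) => //.
by case/setD1P => _ /iP; rewrite !inE eqxx orbT.
Qed.

Lemma card_Pi_le M P : P \in Pi M -> (#|P| <= #|M|)%N.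
Proof.
rewrite in_Pi => hP; rewrite (card_partition hP) -sum1_card leq_sum // => B BP.
by rewrite card_gt0 (partition_neq0 hP BP).
Qed.

Lemma Pi_singletons M Q : Q \in Pi M -> {in M, forall x, pblock Q x :\ x = set0} ->
  Q = [set [set x] | x in M].
Proof.
rewrite in_Pi => hQ h1.
have pQ x : x \in M -> pblock Q x = [set x].
  move=> xM; rewrite -(setD1K (_ : x \in pblock Q x)) ?h1 ?setU0 //.
  by rewrite mem_pblock (cover_partition hQ).
apply/setP => X; apply/idP/imsetP => [XQ | [x xM ->]].
  have /set0Pn[x xX] := partition_neq0 hQ XQ.
  exists x; first exact: subsetP (partitionS hQ XQ) x xX.
  by rewrite -pQ ?(def_pblock (partition_trivIset hQ) XQ xX) // (subsetP (partitionS hQ XQ)).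
by rewrite -pQ // pblock_mem // (cover_partition hQ).
Qed.

Definition isolate Q i := plus_to (unplus Q i) i set0.

Lemma Pi_isolate M i Q : i \in M -> Q \in Pi M -> isolate Q i \in Pi M.
Proof. by move=> iM QM; rewrite Pi_plus_to ?Pi_unplus // !inE eqxx orbT. Qed.

Lemma card_isolate M i Q : i \in M -> Q \in Pi M -> pblock Q i :\ i != set0 ->
  #|isolate Q i| = #|Q|.+1.
Proof.
move=> iM QM C0; have sM := Pi_unplus iM QM.
rewrite -{2}(unplusK iM QM) !(card_plus_to sM) ?unplus_block ?inE ?eqxx ?orbT //.
by rewrite (negbTE C0) addn0 addn1.
Qed.

End Partitions.

Section Ewens.
Variables (R : realFieldType) (U : finType).
Implicit Types (M N X B : {set U}) (P Q : {set {set U}}) (i : U).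

Lemma natr_fact_neq0 n : (n`!%:R : R) != 0.
Proof. by rewrite pnatr_eq0 -lt0n fact_gt0. Qed.

Lemma ewens_neq0 N P : ewens R N P != 0.
Proof.
rewrite mulf_neq0 ?invr_eq0 ?natr_fact_neq0 //.
by apply/prodf_neq0 => B _; rewrite natr_fact_neq0.
Qed.

Lemma ewens_setU1 N X P : X \subset N -> X \notin P ->
  ewens R N (X |: P) =
  ((#|X|.-1)`! * (#|N| - #|X|)`!)%:R / (#|N|`!)%:R * ewens R (N :\: X) P.
Proof.
move=> XN XP; rewrite /ewens big_setU1 //= cardsDS // natrM.
by field; rewrite !natr_fact_neq0.
Qed.

Lemma ewens_plus_to M i P B : P \in Pi (M :\ i) -> B \in P :|: [set set0] ->
  ewens R M (plus_to P i B) = (if B == set0 then 1 else #|B|)%:R * ewens R M P.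
Proof.
move=> hP hB; have iB := notin_Pi_setD1 hP hB.
have iP C : C \in P -> i \notin C by move=> CP; apply: notin_Pi_setD1 hP _; rewrite inE CP.
rewrite /ewens /plus_to mulrA; congr (_ / _); case: eqP => [_ | /eqP B0].
  rewrite setUC big_setU1 /= ?cards1 ?mul1r //.
  by apply/negP => /iP; rewrite inE eqxx.
have BP : B \in P by move: hB; rewrite !inE (negbTE B0) orbF.
rewrite setUC big_setU1 /=; last first.
  by apply/negP => /setD1P[_ /iP]; rewrite !inE eqxx orbT.
rewrite [in RHS](big_setD1 B BP) /= mulrA; congr (_ * _).
rewrite setUC cardsU1 iB; move: B0; rewrite -card_gt0.
by case: #|B| => // b _; rewrite factS natrM mulrC.
Qed.

Lemma sum_ewens_plus_to M i P : i \in M -> P \in Pi (M :\ i) ->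
  \sum_(B in P :|: [set set0]) ewens R M (plus_to P i B) = ewens R (M :\ i) P.
Proof.
move=> iM hP; under eq_bigr => B hB do rewrite (ewens_plus_to hP hB).
rewrite in_Pi in hP; rewrite -mulr_suml setUC big_setU1 ?(partition0 hP) //= eqxx.
under eq_bigr => B BP do rewrite (negbTE (partition_neq0 hP BP)).
rewrite -natr_sum -(card_partition hP) /ewens (cardsD1 i M) iM factS natrM.
by field; rewrite natr_fact_neq0 nat1r pnatr_eq0.
Qed.

Lemma sum_ewens N : \sum_(P in Pi N) ewens R N P = 1.
Proof.
have Pi0 : Pi set0 = [set set0 : {set {set U}}].
  by apply/setP => P; rewrite in_Pi partition_set0 inE.
have [n] := ubnP #|N|; elim: n N => // n IH N.
case: (set_0Vmem N) => [-> _ | [i iN] ltNn].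
  by rewrite Pi0 big_set1 /ewens big_set0 cards0 divr1.
rewrite (reindex_Pi _ iN) -(IH (N :\ i)); last by move: ltNn; rewrite (cardsD1 i N) iN.
by apply: eq_bigr => P hP; rewrite sum_ewens_plus_to.
Qed.

Lemma shapley_weight_split t n : (0 < t < n)%N ->
  ((t`! * (n - t - 1)`!)%:R / (n`!)%:R : R) =
  t%:R / (n - t)%:R * (((t.-1)`! * (n - t)`!)%:R / (n`!)%:R).
Proof.
case: t => // t /andP[_ ltn]; set m := (n - t.+1).-1.
have -> : (n - t.+1 - 1 = m)%N by lia.
have -> : (n - t.+1 = m.+1)%N by lia.
rewrite [t.+1`!]factS [m.+1`!]factS !natrM /=.
by field; rewrite natr_fact_neq0 nat1r pnatr_eq0.
Qed.

End Ewens.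

Section PShapley.
Variables (R : realFieldType) (U : finType).
Implicit Types (N T B : {set U}) (tau : {set {set U}}) (i : U).
Implicit Types (p q w : {set U} -> {set {set U}} -> R).

Lemma notin_coalition N i T : T \subset N :\ i -> i \notin T.
Proof. by move=> /subsetP TN; apply/negP => /TN; rewrite !inE eqxx. Qed.

Lemma setD_coalitionC N i T : (N :\ i) :\: T = (N :\: T) :\ i.
Proof. by rewrite !setDDl setUC. Qed.

Lemma card_with_player N i T : T \subset N :\ i -> #|T :|: [set i]| = #|T|.+1.
Proof. by move=> TN; rewrite setUC cardsU1 (notin_coalition TN). Qed.

Lemma card_coalition_lt N i T : i \in N -> T \subset N :\ i -> (#|T| < #|N|)%N.
Proof. by move=> iN /subset_leq_card; rewrite (cardsD1 i N) iN. Qed.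

Lemma Pi_with_player N i T tau : i \in N -> T \subset N :\ i ->
  tau \in Pi ((N :\ i) :\: T) ->
  (T :|: [set i]) |: tau \in Pi N /\ T :|: [set i] \notin tau.
Proof.
move=> iN TN htau.
have X0 : T :|: [set i] != set0 by apply/set0Pn; exists i; rewrite !inE eqxx orbT.
have {}htau : tau \in Pi (N :\: (T :|: [set i])) by rewrite -setDDl -setD_coalitionC.
split; first by rewrite Pi_setU1 // subUset sub1set iN (subset_trans TN) ?subD1set.
by rewrite in_Pi in htau; apply: (notin_partition_setD htau).
Qed.

Lemma Pi_without_player N i T tau B : i \in N -> T \subset N :\ i -> T != set0 ->
  tau \in Pi ((N :\ i) :\: T) -> B \in tau :|: [set set0] ->
  T |: plus_to tau i B \in Pi N /\ T \notin plus_to tau i B.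
Proof.
move=> iN TN T0; rewrite setD_coalitionC => htau hB.
have iNT : i \in N :\: T by rewrite inE (notin_coalition TN).
have hTN : plus_to tau i B \in Pi (N :\: T) := Pi_plus_to iNT htau hB.
split; first by rewrite Pi_setU1 // (subset_trans TN) ?subD1set.
by rewrite in_Pi in hTN; apply: (notin_partition_setD hTN).
Qed.

Lemma pShapley_ext p q N w i : i \in N -> {in Pi N, p N =1 q N} ->
  pShapley p N w i = pShapley q N w i.
Proof.
move=> iN epq; apply: eq_bigr => T TN; apply: eq_bigr => tau htau.
rewrite epq; last by case: (Pi_with_player iN TN htau).
have [-> | T0] := eqVneq T set0; first by rewrite cards0 !mul0r.
congr (_ - _ * _); apply: eq_bigr => B hB.
by rewrite epq //; case: (Pi_without_player iN TN T0 htau hB).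
Qed.

Definition null_coef p N i T tau : R :=
  p N ((T :|: [set i]) |: tau) -
  #|T|%:R / (#|N| - #|T|)%:R * \sum_(B in tau :|: [set set0]) p N (T |: plus_to tau i B).

Definition null_balanced p : Prop :=
  forall N i T tau, i \in N -> T \subset N :\ i -> T != set0 ->
    tau \in Pi ((N :\ i) :\: T) -> null_coef p N i T tau = 0.

Lemma pShapley_null p N w i : null_player N w i ->
  pShapley p N w i =
  \sum_(T : {set U} | T \subset N :\ i) \sum_(tau in Pi ((N :\ i) :\: T))
    null_coef p N i T tau * w (T :|: [set i]) tau.
Proof.
move=> nw; apply: eq_bigr => T TN; apply: eq_bigr => tau htau.
under eq_bigr => B hB do rewrite -(nw T tau TN htau B hB).
by rewrite -mulr_suml mulrA -mulrBl.
Qed.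

Lemma npp_of_null_balanced p : null_balanced p -> null_player_property (pShapley p).
Proof.
move=> bal N w i gw iN nw; rewrite pShapley_null //.
apply: big1 => T TN; apply: big1 => tau htau.
have [T0 | T0] := eqVneq T set0; last by rewrite bal ?mul0r.
rewrite T0 setD0 in htau *; have hB : set0 \in tau :|: [set set0] by rewrite !inE eqxx orbT.
by rewrite (nw _ _ (sub0set _) _ _ hB) ?setD0 // gw ?mulr0 // Pi_plus_to.
Qed.

(* For i ∉ S, [unplus P i] recovers τ from every τ_{+i↝B}, which makes i null. *)
Definition indicator_game i T0 tau0 : {set U} -> {set {set U}} -> R :=
  fun S P => if i \in S then ((S :\ i == T0) && (P == tau0) : nat)%:R
             else ((S == T0) && (unplus P i == tau0) : nat)%:R.

Section IndicatorGame.
Variables (N T0 : {set U}) (i : U) (tau0 : {set {set U}}).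
Hypotheses (iN : i \in N) (T00 : T0 != set0).
Let w := indicator_game i T0 tau0.

Let w_with_player T tau : T \subset N :\ i ->
  w (T :|: [set i]) tau = ((T == T0) && (tau == tau0) : nat)%:R.
Proof.
by move=> TN; rewrite /w /indicator_game !inE eqxx orbT setUC setU1K ?(notin_coalition TN).
Qed.

Let w_without_player T tau B : T \subset N :\ i -> tau \in Pi ((N :\ i) :\: T) ->
  B \in tau :|: [set set0] -> w T (plus_to tau i B) = ((T == T0) && (tau == tau0) : nat)%:R.
Proof.
move=> TN; rewrite setD_coalitionC => htau hB.
have iNT : i \in N :\: T by rewrite inE (notin_coalition TN).
by rewrite /w /indicator_game (negbTE (notin_coalition TN)) (plus_toK iNT htau hB).
Qed.

Lemma indicator_game_is_game : is_game N w.
Proof. by move=> P _; rewrite /w /indicator_game inE eq_sym (negbTE T00). Qed.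

Lemma indicator_game_null : null_player N w i.
Proof. by move=> S P SN hP B hB; rewrite w_with_player ?w_without_player. Qed.

Lemma pShapley_indicator_game p : T0 \subset N :\ i -> tau0 \in Pi ((N :\ i) :\: T0) ->
  pShapley p N w i = null_coef p N i T0 tau0.
Proof.
move=> T0N htau0; rewrite pShapley_null; last exact: indicator_game_null.
rewrite (bigD1 T0) //= [X in _ + X]big1 ?addr0 => [|T /andP[TN /negbTE TT0]]; last first.
  by apply: big1 => tau _; rewrite w_with_player // TT0 mulr0.
rewrite (bigD1 tau0) //= [X in _ + X]big1 ?addr0 => [|tau /andP[_ /negbTE tt0]]; last first.
  by rewrite w_with_player // eqxx tt0 mulr0.
by rewrite w_with_player // !eqxx mulr1.
Qed.

End IndicatorGame.

Lemma null_balanced_of_npp p : null_player_property (pShapley p) -> null_balanced p.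
Proof.
move=> npp N i T tau iN TN T0 htau.
rewrite -(pShapley_indicator_game iN p TN htau).
by apply: npp => //; [apply: indicator_game_is_game | apply: indicator_game_null].
Qed.

Lemma ewens_null_balanced : null_balanced (@ewens R U).
Proof.
move=> N i T tau iN TN T0 htau; have TN' := subset_trans TN (subD1set N i).
have [_ nX] := Pi_with_player iN TN htau.
have iNT : i \in N :\: T by rewrite inE (notin_coalition TN).
rewrite /null_coef ewens_setU1 //; last by rewrite subUset sub1set iN TN'.
under eq_bigr => B hB do rewrite (ewens_setU1 R TN' (Pi_without_player iN TN T0 htau hB).2).
rewrite -mulr_sumr sum_ewens_plus_to -?setD_coalitionC // -setDDl.
rewrite setD_coalitionC (card_with_player TN) /= subnS -subn1.
rewrite shapley_weight_split ?mulrA ?subrr //.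
by rewrite card_gt0 T0 (card_coalition_lt iN TN).
Qed.

Lemma pShapley_ewens N w i : is_game N w -> i \in N ->
  pShapley (@ewens R U) N w i = MPW N w i.
Proof.
move=> gw iN; apply: eq_bigr => T TN; have TN' := subset_trans TN (subD1set N i).
have iNT : i \in N :\: T by rewrite inE (notin_coalition TN).
have cTi : #|T :|: [set i]| = #|T|.+1 := card_with_player TN.
rewrite sumrB mulrBr; congr (_ - _).
  rewrite mulr_sumr -setDDl -setD_coalitionC; apply: eq_bigr => tau htau.
  have [_ nX] := Pi_with_player iN TN htau.
  rewrite ewens_setU1 ?subUset ?sub1set ?iN ?TN' // cTi -setDDl setD_coalitionC.
  by rewrite /= -subnDA addn1 [RHS]mulrA.
have [-> | T0] := eqVneq T set0.
  rewrite cards0 big1 => [|tau _]; last by rewrite !mul0r.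
  by rewrite big1 ?mulr0 // => P; rewrite setD0 => hP; rewrite gw ?mulr0.
rewrite (reindex_Pi _ iNT) mulr_sumr setD_coalitionC; apply: eq_bigr => tau htau.
rewrite mulr_sumr mulr_sumr; apply: eq_bigr => B hB.
rewrite -setD_coalitionC in htau.
rewrite (ewens_setU1 R TN' (Pi_without_player iN TN T0 htau hB).2) [LHS]mulrA [in LHS]mulrA.
by rewrite -shapley_weight_split ?mulrA // card_gt0 T0 (card_coalition_lt iN TN).
Qed.

End PShapley.

Lemma share_proportional (F : fieldType) (I : finType) (A : {pred I}) (x c : I -> F) x0 :
  1 + \sum_(j in A) c j != 0 ->
  (forall j, j \in A -> x j * (1 + \sum_(k in A) c k) = c j * (x0 + \sum_(k in A) x k)) ->
  forall j, j \in A -> x j = c j * x0.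
Proof.
set n := 1 + _; set X := x0 + _ => n0 hx.
have sum_x : (\sum_(k in A) x k) * n = (n - 1) * X.
  by rewrite mulr_suml (eq_bigr _ hx) -mulr_suml /n addrAC subrr add0r.
have x0n : x0 * n = X.
  apply: (addIr ((n - 1) * X)); rewrite -[in LHS]sum_x -mulrDl -/X.
  by rewrite mulrBl mul1r addrC subrK mulrC.
by move=> j jA; apply: (mulIf n0); rewrite hx // -mulrA x0n.
Qed.

Section BalancedEwens.
Variables (R : realFieldType) (U : finType).
Implicit Types (N T B : {set U}) (i : U) (s Q : {set {set U}}).
Implicit Types (p : {set U} -> {set {set U}} -> R).

Lemma null_balanced_share p N T i s : null_balanced p ->
  i \in N -> s \in Pi (N :\ i) -> T \in s ->
  p N (plus_to s i T) * #|N|%:R = #|T|%:R * \sum_(B in s :|: [set set0]) p N (plus_to s i B).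
Proof.
move=> bal iN hs Ts; have hs' := hs; rewrite in_Pi in hs'.
have T0 := partition_neq0 hs' Ts; have TN := partitionS hs' Ts.
have htau : s :\ T \in Pi ((N :\ i) :\: T) by rewrite in_Pi partitionD1.
have := bal _ _ _ _ iN TN T0 htau; rewrite /null_coef.
have -> : (T :|: [set i]) |: (s :\ T) = plus_to s i T by rewrite /plus_to (negbTE T0) setUC.
under eq_bigr => B hB do rewrite plus_to_setD1 //.
have -> : (s :\ T) :|: [set set0] = (s :|: [set set0]) :\ T.
  by apply/setP => X; rewrite !inE; case: (eqVneq X T) => [->|]; rewrite ?(negbTE T0).
rewrite [in X in _ -> X](big_setD1 T) /=; last by rewrite inE Ts.
move: (\sum_(B in _ :\ T) _) (p N (plus_to s i T)) => S x.
have ltTN : (#|T| < #|N|)%N := card_coalition_lt iN TN.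
rewrite (natrB R (ltnW ltTN)) => /eqP; rewrite subr_eq0 => /eqP ->.
by field; rewrite subr_eq0 eqr_nat neq_ltn ltTN orbT.
Qed.

Lemma null_balanced_plus_to p N i s B : null_balanced p ->
  i \in N -> s \in Pi (N :\ i) -> B \in s ->
  p N (plus_to s i B) = #|B|%:R * p N (plus_to s i set0).
Proof.
move=> bal iN hs; have hs' := hs; rewrite in_Pi in hs'.
have cN : 1 + \sum_(C in s) #|C|%:R = #|N|%:R :> R.
  by rewrite -natr_sum -(card_partition hs') (cardsD1 i N) iN nat1r.
move: B; apply: (share_proportional (x := fun B => p N (plus_to s i B))).
  by rewrite cN pnatr_eq0 -lt0n card_gt0; apply/set0Pn; exists i.
move=> T Ts; rewrite cN (null_balanced_share bal iN hs Ts) setUC big_setU1 //=.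
by rewrite (partition0 hs').
Qed.

Lemma null_balanced_isolate p N Q i : null_balanced p -> i \in N -> Q \in Pi N ->
  pblock Q i :\ i != set0 -> p N Q = #|pblock Q i :\ i|%:R * p N (isolate Q i).
Proof.
move=> bal iN QN C0; have sN := Pi_unplus iN QN.
have Cs : pblock Q i :\ i \in unplus Q i.
  by have := unplus_block Q i; rewrite !inE (negbTE C0) orbF.
by rewrite -{1}(unplusK iN QN) (null_balanced_plus_to bal iN sN Cs).
Qed.

Lemma null_balanced_ewens_ratio p N Q : null_balanced p -> Q \in Pi N ->
  let S0 := [set [set x] | x in N] in p N Q * ewens R N S0 = p N S0 * ewens R N Q.
Proof.
move=> bal QN S0; have [m] := ubnP (#|N| - #|Q|); elim: m Q QN => // m IH Q QN ltm.
have [/existsP[x /andP[xN C0]] | /existsPn all0] :=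
  boolP [exists x in N, pblock Q x :\ x != set0].
  have cQ := card_isolate xN QN C0; have le := card_Pi_le (Pi_isolate xN QN).
  rewrite (null_balanced_isolate bal xN QN C0).
  rewrite [in RHS](null_balanced_isolate (@ewens_null_balanced R U) xN QN C0).
  have ltm' : (#|N| - #|isolate Q x| < m)%N by lia.
  by rewrite -mulrA (IH _ (Pi_isolate xN QN) ltm') mulrCA.
suff -> : Q = S0 by rewrite mulrC.
apply: Pi_singletons QN _ => x xN.
by apply/eqP; move: (all0 x); rewrite xN negbK.
Qed.

Lemma ewens_of_null_balanced p :
  null_balanced p -> (forall N, \sum_(P in Pi N) p N P = 1) ->
  forall N, {in Pi N, p N =1 ewens R N}.
Proof.
move=> bal norm N; set S0 := [set [set x] | x in N].
have pS0 : p N S0 = ewens R N S0.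
  rewrite -[LHS]mulr1 -(sum_ewens R N) mulr_sumr -[RHS]mul1r -(norm N) mulr_suml.
  by apply: eq_bigr => Q QN; rewrite (null_balanced_ewens_ratio bal QN).
move=> Q QN; apply: (mulIf (ewens_neq0 R N S0)).
by rewrite (null_balanced_ewens_ratio bal QN) pS0 mulrC.
Qed.

End BalancedEwens.

Theorem proposition2 (R : realFieldType) (U : finType)
    (p : {set U} -> {set {set U}} -> R) (hp : is_random_partition p) :
  (null_player_property (pShapley p) <->
     (forall (N : {set U}) (P : {set {set U}}), P \in Pi N -> p N P = ewens R N P))
  /\
  ((forall (N : {set U}) (P : {set {set U}}), P \in Pi N -> p N P = ewens R N P) <->
     (forall (N : {set U}) (w : {set U} -> {set {set U}} -> R) (i : U),
        is_game N w -> i \in N -> pShapley p N w i = MPW N w i)).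
Proof.
have norm N : \sum_(P in Pi N) p N P = 1 by case: (hp N).
have npp_ewens := npp_of_null_balanced (@ewens_null_balanced R U).
have nppP : null_player_property (pShapley p) <-> forall N, {in Pi N, p N =1 ewens R N}.
  split=> [/null_balanced_of_npp bal | pE]; first exact: ewens_of_null_balanced bal norm.
  by move=> N w i gw iN nw; rewrite (pShapley_ext w iN (pE N)) npp_ewens.
split=> //; split=> [pE N w i gw iN | pMPW].
  by rewrite (pShapley_ext w iN (pE N)) pShapley_ewens.
by apply/nppP => N w i gw iN nw; rewrite pMPW // -pShapley_ewens // npp_ewens.
Qed.
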